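(* Let $q:\mathbb{R}\to[0,\infty)$ be an even probability density, let $r:\mathbb{R}\to\mathbb{R}$ be measurable, and let $A=\sum_i a_i|i\rangle\langle i|$ be a Hermitian operator on a finite-dimensional Hilbert space $\mathcal{H}$ such that $\int|r(p)|\,q(a_i-p)\,dp<\infty$ for every eigenvalue $a_i$; set $s(a)\coloneqq(q*r)(a)=\int_{\mathbb{R}}q(a-p)r(p)\,dp$. Let $\rho$ be a density operator on $\mathcal{H}$, let $|q\rangle\coloneqq\int_{\mathbb{R}}dp\,\sqrt{q(p)}\,|p\rangle$, let $W\coloneqq e^{i\hat{x}\otimes A}=\sum_i\int dx\,e^{ixa_i}|x\rangle\langle x|\otimes|i\rangle\langle i|$, and define $$P(p)\coloneqq\operatorname{Tr}\!\left[(|p\rangle\langle p|\otimes I)\,W(|q\rangle\langle q|\otimes\rho)W^{\dagger}\right]\quad(p\in\mathbb{R}),$$ the probability density of the outcome of a momentum measurement on the control mode. Then $P$ is a probability density and $$\int_{\mathbb{R}}r(p)\,P(p)\,dp=\operatorname{Tr}[s(A)\rho].$$ That is, preparing $|q\rangle\langle q|\otimes\rho$, applying $e^{i\hat{x}\otimes A}$, measuring the control mode in the momentum basis with outcome $p$ and outputting $r(p)$ yields a random variable with expected value $\operatorname{Tr}[s(A)\rho]$.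
   Context: The control register is a single bosonic mode (qumode) with Hilbert space $L^2(\mathbb{R})$; $\{|x\rangle\}_{x\in\mathbb{R}}$ and $\{|p\rangle\}_{p\in\mathbb{R}}$ are the generalized position and momentum eigenbases, with $\langle x|p\rangle=e^{ipx}/\sqrt{2\pi}$, $\langle p|p'\rangle=\delta(p-p')$, and $\hat{x}=\int x|x\rangle\langle x|\,dx$ is the position quadrature operator. $s(A)$ is defined by the functional calculus. *)

From mathcomp Require Import all_boot all_algebra complex.
From mathcomp Require Import all_classical all_reals all_analysis.
Set Implicit Arguments. Unset Strict Implicit. Unset Printing Implicit Defensive.
Import GRing.Theory Num.Theory.
Local Open Scope ring_scope.

Definition cR (R : realType) (x : R) : R[i] := (x%:C)%C.

Definition adjm (R : realType) m n (M : 'M[R[i]]_(m, n)) : 'M[R[i]]_(n, m) :=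
  map_mx Num.conj M^T.

Definition hermitian (R : realType) n (M : 'M[R[i]]_n) : Prop := adjm M = M.

Definition unitary (R : realType) n (U : 'M[R[i]]_n) : Prop := adjm U *m U = 1%:M.

Definition density_op (R : realType) n (rho : 'M[R[i]]_n) : Prop :=
  [/\ hermitian rho,
      (forall v : 'cV[R[i]]_n, 0 <= (adjm v *m rho *m v) 0 0)
    & \tr rho = 1].

Definition eproj (R : realType) n (U : 'M[R[i]]_n) (i : 'I_n) : 'M[R[i]]_n :=
  col i U *m adjm (col i U).

(* functional calculus f(A) for A = sum_i a_i |i><i|, |i> = i-th column of U *)
Definition fcalc (R : realType) n (U : 'M[R[i]]_n) (a : 'I_n -> R) (f : R -> R)
  : 'M[R[i]]_n := \sum_(i < n) cR (f (a i)) *: eproj U i.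

Definition prob_density (R : realType) (q : R -> R) : Prop :=
  [/\ measurable_fun setT q, (forall x, 0 <= q x)
    & (\int[(@lebesgue_measure R)]_x (q x)%:E = 1)%E].

(* Operators on L^2(R) (x) C^n written in the momentum representation as
   (operator-valued) kernels:  X = \int\int dp dp' |p><p'| (x) X p p'. *)
Definition kernel (R : realType) n := R -> R -> 'M[R[i]]_n.

(* |psi><psi| (x) rho, for psi the momentum wave function p |-> <p|psi> *)
Definition prod_state (R : realType) n (psi : R -> R[i]) (rho : 'M[R[i]]_n)
  : kernel R n := fun p p' => (psi p * Num.conj (psi p')) *: rho.

Definition ket_q (R : realType) (q : R -> R) : R -> R[i] :=
  fun p => cR (Num.sqrt (q p)).

(* W X W^dagger for W = e^{i x^ (x) A} = sum_i e^{i a_i x^} (x) |i><i|.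
   With <x|p> = e^{ipx}/sqrt(2 pi), e^{i a x^}|p> = |p + a>, i.e.
   W (|p> (x) |i>) = |p + a_i> (x) |i>;  hence the kernel of W X W^dagger is
   (p, p') |-> sum_{i,j} |i><i| X(p - a_i, p' - a_j) |j><j|. *)
Definition conjW (R : realType) n (U : 'M[R[i]]_n) (a : 'I_n -> R)
  (X : kernel R n) : kernel R n :=
  fun p p' => \sum_(i < n) \sum_(j < n)
      eproj U i *m X (p - a i) (p' - a j) *m eproj U j.

(* p |-> Tr[(|p><p| (x) I) X] *)
Definition mom_density (R : realType) n (X : kernel R n) : R -> R[i] :=
  fun p => \tr (X p p).

From mathcomp Require Import all_boot all_algebra complex.
From mathcomp Require Import all_classical all_reals all_analysis.
From mathcomp Require Import ring lra measurable_realfun.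
Set Implicit Arguments. Unset Strict Implicit. Unset Printing Implicit Defensive.
Import GRing.Theory Num.Theory.
Local Open Scope ring_scope.
Local Open Scope classical_set_scope.

(* W translates the momentum of the control mode by a_i on the i-th eigenspace
   of A, so the outcome density is the mixture P(p) = \sum_i w_i q(p - a_i) of
   translates of q, with weights w_i = <i|rho|i> >= 0 summing to Tr rho = 1.
   Translation invariance of Lebesgue measure makes P a probability density, and
   by linearity and evenness of q,
   \int r P = \sum_i w_i \int q(a_i - p) r(p) dp = \sum_i w_i s(a_i) = Tr[s(A) rho]. *)

Section lebesgue_translation.
Variable R : realType.
Local Notation mu := (@lebesgue_measure R).

Lemma measurable_fun_shift (c : R) :
  measurable_fun [set: measurableTypeR R]
    (fun x : measurableTypeR R => x - c : measurableTypeR R).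
Proof. by apply: measurable_funD => //; exact: measurable_cst. Qed.

Lemma lebesgue_measure_shift (c : R) (A : set R) : measurable A ->
  pushforward mu (fun x : measurableTypeR R => x - c : measurableTypeR R) A = mu A.
Proof.
move=> mA; apply/esym/lebesgue_measure_unique => //=; first exact: measurable_fun_shift.
move=> _ _ [[x y]] _ <-; rewrite /pushforward /=.
have -> : (fun z => z - c) @^-1` `]x, y] = `](x + c), (y + c)]%classic.
  by apply/seteqP; split => z /=; rewrite !in_itv /= => /andP[? ?]; apply/andP; split; lra.
rewrite !lebesgue_measure_itv /= !lte_fin ltrD2r; case: ifP => // _.
by rewrite -EFinB; congr (_%:E); lra.
Qed.

Lemma ge0_integral_shift (c : R) (f : R -> \bar R) :
  measurable_fun [set: R] f -> (forall x, (0 <= f x)%E) ->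
  (\int[mu]_x f (x - c)%R = \int[mu]_x f x)%E.
Proof.
move=> mf f0.
have := ge0_integral_pushforward (measurable_fun_shift c) mu measurableT mf (fun y _ => f0 y).
rewrite preimage_setT => <-.
(* The measurability of the shift is an argument of the pushforward measure. *)
apply: eq_measure_integral => [|mshift B mB _]; first exact: measurable_fun_shift.
exact: lebesgue_measure_shift.
Qed.

Lemma prob_density_mixture (I : finType) (q : R -> R) (w c : I -> R) :
  prob_density q -> (forall i, 0 <= w i) -> \sum_i w i = 1 ->
  prob_density (fun p => \sum_i w i * q (p - c i)).
Proof.
move=> [mq q0 q1] w0 w1.
have mqc i : measurable_fun [set: R] (fun p => q (p - c i)).
  exact: measurableT_comp mq (measurable_fun_shift _).
have mwq i : measurable_fun [set: R] (fun p => w i * q (p - c i)).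
  by apply: measurable_funM; [exact: measurable_cst | exact: mqc].
have int_wq i : (\int[mu]_p (w i * q (p - c i))%:E = (w i)%:E)%E.
  under eq_integral do rewrite EFinM.
  rewrite ge0_integralZl ?lee_fin //.
  - by rewrite (ge0_integral_shift (c i) (f := fun x => (q x)%:E)) ?q1 ?mule1 //;
      exact/measurable_EFinP.
  - by apply/measurable_EFinP; exact: mqc.
  - by move=> p _; rewrite lee_fin.
split.
- exact: measurable_sum.
- by move=> p; apply: sumr_ge0 => i _; exact: mulr_ge0.
- under eq_integral do rewrite -sumEFin.
  rewrite ge0_integral_sum //.
  + by under eq_bigr do rewrite int_wq; rewrite sumEFin w1.
  + by move=> i; apply/measurable_EFinP; exact: mwq.
  + by move=> i p _; rewrite lee_fin mulr_ge0.
Qed.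

Lemma integrable_convolution_term (q r : R -> R) (c : R) :
  measurable_fun [set: R] q -> measurable_fun [set: R] r -> (forall x, 0 <= q x) ->
  (\int[mu]_p (`|r p| * q (c - p))%:E < +oo)%E ->
  mu.-integrable [set: R] (fun p => (q (c - p) * r p)%:E).
Proof.
move=> mq mr q0 fin; apply/integrableP; split.
  apply/measurable_EFinP; apply: measurable_funM => //.
  by apply: measurableT_comp mq _; apply: measurable_funB => //; exact: measurable_cst.
under eq_integral do rewrite /= normrM (ger0_norm (q0 _)) mulrC.
exact: fin.
Qed.

End lebesgue_translation.

Section weighted_sum_integral.
Context d (T : measurableType d) (R : realType) (mu : {measure set T -> \bar R}).
Variables (D : set T) (I : finType) (w : I -> R) (g : I -> T -> R).
Hypotheses (mD : measurable D) (gi : forall i, mu.-integrable D (EFin \o g i)).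

Let wgi i : mu.-integrable D (fun x => (w i)%:E * (g i x)%:E)%E.
Proof. exact: integrableZl mD _ _ (gi i). Qed.

Lemma integrable_weighted_sum :
  mu.-integrable D (fun x => (\sum_i w i * g i x)%:E).
Proof.
under eq_fun do rewrite -sumEFin; under eq_fun do under eq_bigr do rewrite EFinM.
by apply: (integrable_sum mD) => i _; exact: wgi.
Qed.

Lemma Rintegral_weighted_sum :
  \int[mu]_(x in D) (\sum_i w i * g i x) = \sum_i w i * \int[mu]_(x in D) g i x.
Proof.
have gi_fin i : (\int[mu]_(x in D) (g i x)%:E)%E \is a fin_num.
  exact: (integrable_fin_num mD (gi i)).
have wgiE i : (\int[mu]_(x in D) ((w i)%:E * (g i x)%:E) =
               (w i)%:E * \int[mu]_(x in D) (g i x)%:E)%E.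
  by rewrite (integralZl mD (gi i)).
rewrite /Rintegral; under eq_integral do rewrite -sumEFin.
under eq_integral do under eq_bigr do rewrite EFinM.
rewrite (integral_sum mD wgi) -sum_fine => [|i _]; last by rewrite wgiE fin_numM.
by apply: eq_bigr => i _; rewrite wgiE fineM.
Qed.

End weighted_sum_integral.

Section spectral_projections.
Variables (R : realType) (n : nat) (U : 'M[R[i]]_n).

Lemma adjm_col_mul_col (V : 'M[R[i]]_n) j i :
  (adjm (col j U) *m col i V) 0 0 = (adjm U *m V) j i.
Proof. by rewrite !mxE; apply: eq_bigr => k _; rewrite !mxE. Qed.

Lemma mxtrace_eproj_mul (rho : 'M[R[i]]_n) i :
  \tr (eproj U i *m rho) = (adjm (col i U) *m rho *m col i U) 0 0.
Proof. by rewrite /eproj -mulmxA mxtrace_mulC trace_mx11. Qed.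

Lemma mxtrace_fcalc_mul (a : 'I_n -> R) (f : R -> R) (rho : 'M[R[i]]_n) :
  \tr (fcalc U a f *m rho) = \sum_i cR (f (a i)) * \tr (eproj U i *m rho).
Proof.
rewrite /fcalc mulmx_suml raddf_sum; apply: eq_bigr => i _ /=.
by rewrite -scalemxAl mxtraceZ.
Qed.

Hypothesis unitaryU : unitary U.

Lemma eproj_mul i j : eproj U j *m eproj U i = (j == i)%:R *: eproj U i.
Proof.
rewrite /eproj mulmxA -(mulmxA (col j U)).
rewrite [adjm _ *m col i U]mx11_scalar adjm_col_mul_col unitaryU mxE mul_mx_scalar.
by case: eqVneq => [->|_]; rewrite ?scale1r ?scale0r ?mul0mx.
Qed.

Lemma sum_eproj : \sum_i eproj U i = 1%:M.
Proof.
have <- : U *m adjm U = 1%:M by apply: mulmx1C.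
apply/matrixP => x y; rewrite summxE !mxE; apply: eq_bigr => k _.
by rewrite !mxE big_ord1 !mxE.
Qed.

(* Only the diagonal terms i = j survive the trace, by orthogonality of the eproj U i. *)
Lemma mom_density_conjW_prod_state (a : 'I_n -> R) (psi : R -> R[i]) (rho : 'M[R[i]]_n) p :
  mom_density (conjW U a (prod_state psi rho)) p =
  \sum_i (psi (p - a i) * (psi (p - a i))^*) * \tr (eproj U i *m rho).
Proof.
rewrite /mom_density /conjW /prod_state raddf_sum; apply: eq_bigr => i _.
have trE j : \tr (eproj U i *m ((psi (p - a i) * (psi (p - a j))^*) *: rho) *m eproj U j)
    = (j == i)%:R * ((psi (p - a i) * (psi (p - a j))^*) * \tr (eproj U i *m rho)).
  rewrite -scalemxAr -scalemxAl mxtraceZ mxtrace_mulC mulmxA eproj_mul.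
  by rewrite -scalemxAl mxtraceZ mulrCA.
rewrite raddf_sum (bigD1 i) //= big1 => [|j /negbTE ji]; last by rewrite trE ji mul0r.
by rewrite trE eqxx mul1r addr0.
Qed.

End spectral_projections.

Definition spectral_weight (R : realType) n (U rho : 'M[R[i]]_n) (i : 'I_n) : R :=
  complex.Re (\tr (eproj U i *m rho)).

Section spectral_weights.
Variables (R : realType) (n : nat) (U rho : 'M[R[i]]_n).
Hypothesis rho_density : density_op rho.

Lemma mxtrace_eproj_mul_ge0 i : 0 <= \tr (eproj U i *m rho).
Proof. by case: rho_density => _ rho_psd _; rewrite mxtrace_eproj_mul. Qed.

Lemma spectral_weightE i : \tr (eproj U i *m rho) = cR (spectral_weight U rho i).
Proof.
have := mxtrace_eproj_mul_ge0 i; rewrite /spectral_weight.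
by case: (\tr _) => x y; rewrite lecE /= => /andP[/eqP ->].
Qed.

Lemma spectral_weight_ge0 i : 0 <= spectral_weight U rho i.
Proof. by have := mxtrace_eproj_mul_ge0 i; rewrite spectral_weightE /cR lecR. Qed.

Lemma sum_spectral_weight : unitary U -> \sum_i spectral_weight U rho i = 1.
Proof.
move=> unitaryU; apply: (@complexI R); rewrite rmorph_sum rmorph1.
case: rho_density => _ _ <-.
rewrite -[X in \tr X](mul1mx rho) -(sum_eproj unitaryU) mulmx_suml raddf_sum.
by apply: eq_bigr => i _ /=; rewrite spectral_weightE.
Qed.

End spectral_weights.

Lemma ket_q_mul_conj (R : realType) (q : R -> R) p :
  0 <= q p -> ket_q q p * (ket_q q p)^* = cR (q p).
Proof.
move=> q0; rewrite /ket_q geC0_conj; last by rewrite /cR lecR sqrtr_ge0.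
by rewrite /cR -rmorphM -expr2 sqr_sqrtr.
Qed.

Theorem theorem3 (R : realType) (n : nat)
  (q : R -> R) (r : R -> R)
  (A : 'M[R[i]]_n) (U : 'M[R[i]]_n) (a : 'I_n -> R) (rho : 'M[R[i]]_n) :
  prob_density q ->
  (forall x, q (- x) = q x) ->
  measurable_fun setT r ->
  unitary U ->
  A = \sum_(i < n) cR (a i) *: eproj U i ->
  (forall i, (\int[(@lebesgue_measure R)]_p (`|r p| * q (a i - p))%:E < +oo)%E) ->
  density_op rho ->
  let s := fun x : R => \int[(@lebesgue_measure R)]_p (q (x - p) * r p) in
  let P := mom_density (conjW U a (prod_state (ket_q q) rho)) in
  exists Pr : R -> R,
    [/\ (forall p, P p = cR (Pr p)),
        prob_density Pr,
        (@lebesgue_measure R).-integrable setT (fun p => (r p * Pr p)%:E)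
      & cR (\int[(@lebesgue_measure R)]_p (r p * Pr p)) = \tr (fcalc U a s *m rho)].
Proof.
move=> q_density q_even mr unitaryU _ r_int rho_density s P.
have [mq q0 _] := q_density.
pose w := spectral_weight U rho.
pose Pr p := \sum_i w i * q (p - a i).
have rPr_mixture p : r p * Pr p = \sum_i w i * (q (a i - p) * r p).
  rewrite mulr_sumr; apply: eq_bigr => i _.
  by rewrite -q_even opprB; ring.
have integrable_qr i :
    (@lebesgue_measure R).-integrable setT (EFin \o fun p => q (a i - p) * r p).
  exact: integrable_convolution_term.
exists Pr; split.
- move=> p; rewrite /P (mom_density_conjW_prod_state unitaryU).
  under eq_bigr do rewrite ket_q_mul_conj // spectral_weightE //.
  by rewrite /cR rmorph_sum; apply: eq_bigr => i _; rewrite rmorphM mulrC.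
- apply: (prob_density_mixture (w := w)) => //; first exact: spectral_weight_ge0.
  exact: sum_spectral_weight.
- by under eq_fun do rewrite rPr_mixture; exact: integrable_weighted_sum.
- under eq_Rintegral do rewrite rPr_mixture.
  rewrite Rintegral_weighted_sum // mxtrace_fcalc_mul.
  under [RHS]eq_bigr do rewrite spectral_weightE //.
  by rewrite /cR rmorph_sum; apply: eq_bigr => i _; rewrite rmorphM mulrC.
Qed.
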